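(* Let $(\Sigma,\theta)$ be a Noetherian space. The map $S$ sending a topology $\tau$ on $\Sigma^*$ to the topology generated by the sets $\uparrow_{\le^*}(UV)$ for $U,V\in\tau$ and $\uparrow_{\le^*}W$ for $W\in\theta$ is a topology expander over $\Sigma^*$.
   Context: $\Sigma^*$: finite words; $UV$: concatenation; letters identified with one-letter words; $\le$ the specialisation preorder of $\theta$; $\le^*$ Higman's ordering ($u\le^*w$ iff a strictly increasing map $h$ of positions satisfies $u_i\le w_{h(i)}$); $\uparrow_{\le^*}$ upward closure. Noetherian: every subset compact. A refinement function over $X$ is a map $R$ from topologies on $X$ to topologies on $X$, monotone for inclusion and preserving Noetherianity. For a topology $\tau$ and $H\subseteq X$, $\tau|_H$ is the topology on $X$ generated by $\{U\cap H:U\in\tau\}$. A topology expander is a refinement function $R$ such that for every Noetherian $\tau$ with $\tau\subseteq R(\tau)$ and every $H$ closed in $\tau$, $R(\tau)|_H=R(\tau|_H)|_H$. *)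

From Stdlib Require Import List.
Import ListNotations.

Definition subset {X : Type} (A B : X -> Prop) : Prop := forall x, A x -> B x.

Definition fsubset {X : Type} (F G : (X -> Prop) -> Prop) : Prop :=
  forall U, F U -> G U.
Definition fequal {X : Type} (F G : (X -> Prop) -> Prop) : Prop :=
  forall U, F U <-> G U.

Definition is_topology {X : Type} (t : (X -> Prop) -> Prop) : Prop :=
  t (fun _ => True) /\
  (forall U V, t U -> t V -> t (fun x => U x /\ V x)) /\
  (forall F : (X -> Prop) -> Prop, fsubset F t ->
     t (fun x => exists U, F U /\ U x)).

Definition is_closed {X : Type} (t : (X -> Prop) -> Prop) (H : X -> Prop) : Prop :=
  t (fun x => ~ H x).

Definition compact {X : Type} (t : (X -> Prop) -> Prop) (A : X -> Prop) : Prop :=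
  forall F : (X -> Prop) -> Prop, fsubset F t ->
    subset A (fun x => exists U, F U /\ U x) ->
    exists l : list (X -> Prop),
      (forall U, In U l -> F U) /\ subset A (fun x => exists U, In U l /\ U x).

Definition noetherian {X : Type} (t : (X -> Prop) -> Prop) : Prop :=
  forall A : X -> Prop, compact t A.

Definition generated {X : Type} (G : (X -> Prop) -> Prop) : (X -> Prop) -> Prop :=
  fun U => forall t, is_topology t -> fsubset G t -> t U.

Definition restrict {X : Type} (t : (X -> Prop) -> Prop) (H : X -> Prop)
  : (X -> Prop) -> Prop :=
  generated (fun A => exists U, t U /\ A = (fun x => U x /\ H x)).

Definition refinement_function {X : Type}
  (R : ((X -> Prop) -> Prop) -> ((X -> Prop) -> Prop)) : Prop :=
  (forall t, is_topology t -> is_topology (R t)) /\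
  (forall t1 t2, is_topology t1 -> is_topology t2 -> fsubset t1 t2 ->
     fsubset (R t1) (R t2)) /\
  (forall t, is_topology t -> noetherian t -> noetherian (R t)).

Definition topology_expander {X : Type}
  (R : ((X -> Prop) -> Prop) -> ((X -> Prop) -> Prop)) : Prop :=
  refinement_function R /\
  (forall t, is_topology t -> noetherian t -> fsubset t (R t) ->
     forall H : X -> Prop, is_closed t H ->
       fequal (restrict (R t) H) (restrict (R (restrict t H)) H)).

Definition spec_le {S : Type} (theta : (S -> Prop) -> Prop) (x y : S) : Prop :=
  forall U, theta U -> U x -> U y.

Definition higman {S : Type} (le : S -> S -> Prop) (u w : list S) : Prop :=
  exists h : nat -> nat,
    (forall i j, i < j -> j < length u -> h i < h j) /\
    (forall i, i < length u ->
       exists a b, nth_error u i = Some a /\ nth_error w (h i) = Some b /\ le a b).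

Definition upclose {S : Type} (le : S -> S -> Prop) (A : list S -> Prop)
  : list S -> Prop :=
  fun w => exists u, A u /\ higman le u w.

Definition concat_set {S : Type} (U V : list S -> Prop) : list S -> Prop :=
  fun w => exists u v, U u /\ V v /\ w = u ++ v.

Definition letters {S : Type} (W : S -> Prop) : list S -> Prop :=
  fun w => exists a, W a /\ w = [a].

Definition S_map {S : Type} (theta : (S -> Prop) -> Prop)
  (tau : (list S -> Prop) -> Prop) : (list S -> Prop) -> Prop :=
  generated (fun A =>
    (exists U V, tau U /\ tau V /\
       A = upclose (spec_le theta) (concat_set U V)) \/
    (exists W, theta W /\ A = upclose (spec_le theta) (letters W))).

(* The subbasic sets of S(tau) are the images of the open rectangles of tau x tau
   under (U, V) |-> up(UV) and of the opens of theta under W |-> up W.  Both maps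
   preserve unions, and a product of Noetherian spaces is Noetherian, so every
   family of subbasic sets has a finite subfamily with the same union; an
   Alexander-type argument shows that this finiteness passes from a subbasis to
   the topology it generates.  For the expander identity, a closed set H of tau
   is open-complemented in S(tau), hence downward closed for Higman's ordering:
   then u v in H forces u, v in H, so up(UV) and up((U n H)(V n H)) agree on H. *)

From Stdlib Require Import List Lia Classical ClassicalEpsilon
  FunctionalExtensionality PropExtensionality.
Import ListNotations.

Definition union_of {X : Type} (F : (X -> Prop) -> Prop) : X -> Prop :=
  fun x => exists U, F U /\ U x.
Definition lunion {X : Type} (l : list (X -> Prop)) : X -> Prop :=
  fun x => exists U, In U l /\ U x.
Definition inter {X : Type} (l : list (X -> Prop)) : X -> Prop :=
  fun x => forall U, In U l -> U x.

Lemma set_ext {X : Type} (U V : X -> Prop) : (forall x, U x <-> V x) -> U = V.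
Proof.
  intros E. apply functional_extensionality; intro x.
  apply propositional_extensionality, E.
Qed.

Lemma open_ext {X : Type} (t : (X -> Prop) -> Prop) (U V : X -> Prop) :
  t U -> (forall x, U x <-> V x) -> t V.
Proof. intros HU E. rewrite <- (set_ext U V E). exact HU. Qed.

Lemma list_choice {A B : Type} (R : A -> B -> Prop) (l : list A) :
  (forall a, In a l -> exists b, R a b) ->
  exists l', (forall b, In b l' -> exists a, R a b) /\
             (forall a, In a l -> exists b, In b l' /\ R a b).
Proof.
  induction l as [|a l IH]; intros H.
  - exists []. split; intros ? [].
  - destruct (H a (or_introl eq_refl)) as [b Hb].
    destruct IH as [l' [H1 H2]]. { intros a' Ha'. apply H. right. exact Ha'. }
    exists (b :: l'). split.
    + intros b' [<- | Hb']; eauto.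
    + intros a' [<- | Ha'].
      * exists b. split; [left|]; auto.
      * destruct (H2 a' Ha') as [b' [Hb' Rb']]. exists b'. split; [right|]; auto.
Qed.

(** * Generated topologies *)

Lemma generated_is_topology {X : Type} (G : (X -> Prop) -> Prop) :
  is_topology (generated G).
Proof.
  split; [|split].
  - intros t Ht _. apply (proj1 Ht).
  - intros U V HU HV t Ht HG. apply (proj1 (proj2 Ht)); [apply HU | apply HV]; assumption.
  - intros F HF t Ht HG. apply (proj2 (proj2 Ht)). intros U HU. apply HF; assumption.
Qed.

Lemma generated_incl {X : Type} (G : (X -> Prop) -> Prop) : fsubset G (generated G).
Proof. intros U HU t _ HG. apply HG, HU. Qed.

Lemma generated_min {X : Type} (G t : (X -> Prop) -> Prop) :
  is_topology t -> fsubset G t -> fsubset (generated G) t.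
Proof. intros Ht HG U HU. apply HU; assumption. Qed.

Lemma generated_sub {X : Type} (G1 G2 : (X -> Prop) -> Prop) :
  fsubset G1 (generated G2) -> fsubset (generated G1) (generated G2).
Proof. intros H. apply generated_min; [apply generated_is_topology | exact H]. Qed.

Definition finite_inter {X : Type} (G : (X -> Prop) -> Prop) (B : X -> Prop) : Prop :=
  exists l, (forall U, In U l -> G U) /\ B = inter l.

Lemma generated_basis {X : Type} (G : (X -> Prop) -> Prop) (O : X -> Prop) :
  generated G O -> forall x, O x ->
  exists B, finite_inter G B /\ B x /\ subset B O.
Proof.
  intros HO.
  pattern O. revert O HO. apply generated_min; [split; [|split] |].
  - intros x _. exists (inter []). split; [exists []; split; [intros ? []|reflexivity]|].
    split; [intros ? []|intros y _; exact I].
  - intros U V HU HV x [Ux Vx].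
    destruct (HU x Ux) as [B1 [[l1 [G1 ->]] [B1x B1U]]].
    destruct (HV x Vx) as [B2 [[l2 [G2 ->]] [B2x B2V]]].
    exists (inter (l1 ++ l2)). split; [|split].
    + exists (l1 ++ l2). split; [|reflexivity].
      intros S HS. apply in_app_or in HS as [HS|HS]; auto.
    + intros S HS. apply in_app_or in HS as [HS|HS]; [apply B1x | apply B2x]; exact HS.
    + intros y Hy. split; [apply B1U | apply B2V];
        intros S HS; apply Hy, in_or_app; auto.
  - intros F HF x [U [FU Ux]].
    destruct (HF U FU x Ux) as [B [HB [Bx BU]]].
    exists B. repeat split; auto. intros y By. exists U. auto.
  - intros S GS x Sx. exists (inter [S]). split; [exists [S]; split; [|reflexivity]|].
    + intros T [<- | []]. exact GS.
    + split; [intros T [<- | []]; exact Sx | intros y Hy; apply Hy; left; reflexivity].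
Qed.

(** * Noetherian families *)

Definition noetherian_family {X : Type} (G : (X -> Prop) -> Prop) : Prop :=
  forall F, fsubset F G ->
  exists l, (forall U, In U l -> F U) /\ subset (union_of F) (lunion l).

Definition image_family {X Y : Type} (phi : (X -> Prop) -> (Y -> Prop))
  (G : (X -> Prop) -> Prop) : (Y -> Prop) -> Prop :=
  fun V => exists U, G U /\ V = phi U.

Lemma noetherian_family_of_noetherian {X : Type} (t : (X -> Prop) -> Prop) :
  noetherian t -> noetherian_family t.
Proof. intros Hn F HF. apply (Hn (union_of F) F HF). intros x Hx. exact Hx. Qed.

Lemma noetherian_family_sub {X : Type} (G G' : (X -> Prop) -> Prop) :
  fsubset G' G -> noetherian_family G -> noetherian_family G'.
Proof. intros Hsub HG F HF. apply HG. intros U FU. apply Hsub, HF, FU. Qed.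

Lemma noetherian_family_union {X : Type} (G1 G2 : (X -> Prop) -> Prop) :
  noetherian_family G1 -> noetherian_family G2 ->
  noetherian_family (fun U => G1 U \/ G2 U).
Proof.
  intros H1 H2 F HF.
  destruct (H1 (fun U => F U /\ G1 U)) as [l1 [Hl1 C1]]; [intros U [_ HU]; exact HU|].
  destruct (H2 (fun U => F U /\ G2 U)) as [l2 [Hl2 C2]]; [intros U [_ HU]; exact HU|].
  exists (l1 ++ l2). split.
  - intros U HU. apply in_app_or in HU as [HU|HU]; [apply Hl1 | apply Hl2]; exact HU.
  - intros x [U [FU Ux]].
    destruct (HF U FU) as [G1U|G2U].
    + destruct (C1 x) as [V [HV Vx]]; [exists U; auto|].
      exists V. split; [apply in_or_app; left|]; assumption.
    + destruct (C2 x) as [V [HV Vx]]; [exists U; auto|].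
      exists V. split; [apply in_or_app; right|]; assumption.
Qed.

Lemma noetherian_family_image {X Y : Type} (phi : (X -> Prop) -> (Y -> Prop))
  (G : (X -> Prop) -> Prop) :
  (forall U V, subset U V -> subset (phi U) (phi V)) ->
  (forall l, subset (phi (lunion l)) (lunion (map phi l))) ->
  noetherian_family G -> noetherian_family (image_family phi G).
Proof.
  intros Hmono Hunion HG F HF.
  destruct (HG (fun U => G U /\ F (phi U))) as [l [Hl Cl]]; [intros U [HU _]; exact HU|].
  exists (map phi l). split.
  - intros V HV. apply in_map_iff in HV as [U [<- HU]]. apply (Hl U HU).
  - intros y [V [FV Vy]].
    destruct (HF V FV) as [U [GU ->]].
    apply Hunion. refine (Hmono U _ _ y Vy).
    intros x Ux. apply Cl. exists U. auto.
Qed.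

Lemma chain_bound {X : Type} (d : nat -> X -> Prop) :
  (forall n, subset (d n) (d (S n))) ->
  forall l : list (X -> Prop), (forall U, In U l -> exists n, subset U (d n)) ->
  exists N, subset (lunion l) (d N).
Proof.
  intros Hd.
  assert (mono : forall n m, n <= m -> subset (d n) (d m)).
  { intros n m Hnm. induction Hnm; intros x Hx; [exact Hx | apply Hd, IHHnm, Hx]. }
  induction l as [|U l IH]; intros H.
  - exists 0. intros x [U [[] _]].
  - destruct (H U (or_introl eq_refl)) as [n Hn].
    destruct IH as [N HN]. { intros V HV. apply H. right. exact HV. }
    exists (max n N). intros x [V [[<- | HV] Vx]].
    + apply (mono n); [lia | apply Hn, Vx].
    + apply (mono N); [lia | apply HN]. exists V. auto.
Qed.

(* Among the subfamilies of [G] satisfying [Q] one has a maximal union: otherwise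
   dependent choice yields a strictly increasing chain of unions, which the finite
   subfamily of its total union bounds. *)
Lemma noetherian_family_maximal {X : Type} (G : (X -> Prop) -> Prop)
  (Q : ((X -> Prop) -> Prop) -> Prop) (F0 : (X -> Prop) -> Prop) :
  noetherian_family G -> (forall F, Q F -> fsubset F G) -> Q F0 ->
  exists F, Q F /\
    forall F', Q F' -> subset (union_of F) (union_of F') ->
      subset (union_of F') (union_of F).
Proof.
  intros HG HQG HF0. apply NNPP. intros Hno.
  assert (step : forall F : {F | Q F}, {F' | Q F' /\
            subset (union_of (proj1_sig F)) (union_of F') /\
            ~ subset (union_of F') (union_of (proj1_sig F))}).
  { intros [F HF]. apply constructive_indefinite_description. simpl.
    apply NNPP. intros Hmax. apply Hno. exists F. split; [exact HF|].
    intros F' HF' Hsub. apply NNPP. intros Hnot. apply Hmax. exists F'. auto. }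
  pose (next := fun F : {F | Q F} => exist Q (proj1_sig (step F)) (proj1 (proj2_sig (step F)))).
  pose (c := fix c n := match n with 0 => exist Q F0 HF0 | S n => next (c n) end).
  pose (d := fun n => union_of (proj1_sig (c n))).
  assert (Hd : forall n, subset (d n) (d (S n))).
  { intro n. exact (proj1 (proj2 (proj2_sig (step (c n))))). }
  destruct (HG (fun U => exists n, proj1_sig (c n) U)) as [l [Hl Cl]].
  { intros U [n HU]. apply (HQG _ (proj2_sig (c n))), HU. }
  destruct (chain_bound d Hd l) as [N HN].
  { intros U HU. destruct (Hl U HU) as [n Un]. exists n. intros x Ux. exists U. auto. }
  assert (Hback : subset (d (S N)) (d N)).
  { intros x [U [HU Ux]]. apply HN, Cl. exists U. split; [exists (S N)|]; assumption. }
  exact (proj2 (proj2 (proj2_sig (step (c N)))) Hback).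
Qed.

Section FiniteIntersections.
Context {X : Type} (G : (X -> Prop) -> Prop) (L : (X -> Prop) -> Prop).

Definition finite_cover_mod (W : X -> Prop) : Prop :=
  exists Ls, (forall B, In B Ls -> L B) /\
             subset (union_of L) (fun x => lunion Ls x \/ W x).

Lemma finite_cover_mod_weaken (W W' : X -> Prop) :
  subset W W' -> finite_cover_mod W -> finite_cover_mod W'.
Proof.
  intros HW [Ls [HLs C]]. exists Ls. split; [exact HLs|].
  intros x Hx. destruct (C x Hx); [left | right; apply HW]; assumption.
Qed.

Lemma finite_cover_mod_member (W B : X -> Prop) :
  L B -> finite_cover_mod (fun x => W x \/ B x) -> finite_cover_mod W.
Proof.
  intros LB [Ls [HLs C]]. exists (B :: Ls). split.
  - intros B' [<- | HB']; auto.
  - intros x Hx. destruct (C x Hx) as [[B' [HB' B'x]] | [Wx | Bx]].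
    + left. exists B'. split; [right|]; assumption.
    + right. exact Wx.
    + left. exists B. split; [left|]; auto.
Qed.

Lemma finite_cover_mod_inter (W : X -> Prop) (l : list (X -> Prop)) :
  (forall S, In S l -> finite_cover_mod (fun x => W x \/ S x)) ->
  finite_cover_mod (fun x => W x \/ inter l x).
Proof.
  induction l as [|S l IH]; intros H.
  - exists []. split; [intros ? []|]. intros x _. right. right. intros ? [].
  - destruct (H S (or_introl eq_refl)) as [Ls1 [HLs1 C1]].
    destruct IH as [Ls2 [HLs2 C2]]. { intros S' HS'. apply H. right. exact HS'. }
    exists (Ls1 ++ Ls2). split.
    { intros B HB. apply in_app_or in HB as [HB|HB]; auto. }
    intros x Hx.
    destruct (C1 x Hx) as [[B [HB Bx]] | [Wx | Sx]].
    { left. exists B. split; [apply in_or_app; left|]; assumption. }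
    { right. left. exact Wx. }
    destruct (C2 x Hx) as [[B [HB Bx]] | [Wx | lx]].
    { left. exists B. split; [apply in_or_app; right|]; assumption. }
    { right. left. exact Wx. }
    right. right. intros U [<- | HU]; [exact Sx | exact (lx U HU)].
Qed.

(* The Alexander subbase argument: take a family [F] of subbasic sets with maximal
   union among those modulo which [L] has no finite subcover; a point of [union_of L]
   outside [union_of F] lies in some intersection [inter l] from [L], and enlarging
   [F] by each member of [l] would yield finite subcovers that combine into one. *)
Lemma finite_cover_of_finite_inter :
  noetherian_family G -> fsubset L (finite_inter G) -> finite_cover_mod (fun _ => False).
Proof.
  intros HG HL. apply NNPP. intros Hno.
  destruct (noetherian_family_maximal G
              (fun F => fsubset F G /\ ~ finite_cover_mod (union_of F)) (fun _ => False))
    as [F [[FG Fbad] Fmax]].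
  - exact HG.
  - intros F [HF _]. exact HF.
  - split; [intros ? []|]. intros Hc. apply Hno. revert Hc.
    apply finite_cover_mod_weaken. intros x [U [[] _]].
  - assert (Hout : exists x, union_of L x /\ ~ union_of F x).
    { apply NNPP. intros Hall. apply Fbad. exists []. split; [intros ? []|].
      intros x Hx. right. apply NNPP. intros HFx. apply Hall. exists x. auto. }
    destruct Hout as [x [[B [LB Bx]] HFx]].
    destruct (HL B LB) as [l [lG ->]].
    apply Fbad, (finite_cover_mod_member _ (inter l) LB), finite_cover_mod_inter.
    intros S HS.
    pose (FS := fun U => F U \/ U = S).
    assert (Hgood : finite_cover_mod (union_of FS)).
    { apply NNPP. intros Hbad.
      apply HFx, (Fmax FS).
      - split; [intros U [HU | ->]; [apply FG | apply lG] |]; assumption.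
      - intros y [U [FU Uy]]. exists U. split; [left|]; assumption.
      - exists S. split; [right; reflexivity | apply Bx, HS]. }
    revert Hgood. apply finite_cover_mod_weaken.
    intros y [U [[FU | ->] Uy]]; [left; exists U; auto | right; exact Uy].
Qed.

End FiniteIntersections.

Lemma noetherian_family_finite_inter {X : Type} (G : (X -> Prop) -> Prop) :
  noetherian_family G -> noetherian_family (finite_inter G).
Proof.
  intros HG L HL.
  destruct (finite_cover_of_finite_inter G L HG HL) as [Ls [HLs C]].
  exists Ls. split; [exact HLs|].
  intros x Hx. destruct (C x Hx) as [Hc | []]. exact Hc.
Qed.

Lemma noetherian_generated {X : Type} (G : (X -> Prop) -> Prop) :
  noetherian_family G -> noetherian (generated G).
Proof.
  intros HG A F HF HA.
  pose (L := fun B => finite_inter G B /\ exists O, F O /\ subset B O).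
  destruct (noetherian_family_finite_inter G HG L) as [Bs [HBs C]].
  { intros B [HB _]. exact HB. }
  destruct (list_choice (fun B O => F O /\ subset B O) Bs) as [Os [HOs COs]].
  { intros B HB. apply (proj2 (HBs B HB)). }
  exists Os. split.
  - intros O HO. destruct (HOs O HO) as [B [FO _]]. exact FO.
  - intros x Ax.
    destruct (HA x Ax) as [O [FO Ox]].
    destruct (generated_basis G O (HF O FO) x Ox) as [B [HB [Bx BO]]].
    destruct (C x) as [B' [HB' B'x]]. { exists B. split; [split; eauto|exact Bx]. }
    destruct (COs B' HB') as [O' [HO' [_ B'O']]].
    exists O'. split; [exact HO' | apply B'O', B'x].
Qed.

Lemma noetherian_family_preimage {X Y : Type} (f : Y -> X) (G : (X -> Prop) -> Prop) :
  noetherian_family G -> noetherian_family (image_family (fun U y => U (f y)) G).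
Proof.
  apply noetherian_family_image.
  - intros U V HUV y Uy. apply HUV, Uy.
  - intros l y [U [HU Uy]]. exists (fun y => U (f y)).
    split; [apply (in_map (fun U y => U (f y))), HU | exact Uy].
Qed.

Definition prod_topology {X : Type} (t : (X -> Prop) -> Prop) : (X * X -> Prop) -> Prop :=
  generated (fun R => image_family (fun U p => U (fst p)) t R \/
                      image_family (fun U p => U (snd p)) t R).

Lemma noetherian_prod_topology {X : Type} (t : (X -> Prop) -> Prop) :
  noetherian t -> noetherian (prod_topology t).
Proof.
  intros Hn. apply noetherian_generated, noetherian_family_union;
    apply noetherian_family_preimage, noetherian_family_of_noetherian, Hn.
Qed.

Lemma prod_topology_rect {X : Type} (t : (X -> Prop) -> Prop) (U V : X -> Prop) :
  t U -> t V -> prod_topology t (fun p => U (fst p) /\ V (snd p)).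
Proof.
  intros HU HV. apply (generated_is_topology _); apply generated_incl.
  - left. exists U. auto.
  - right. exists V. auto.
Qed.

(** * Topologies on words *)

Lemma higman_trans {A : Type} (le : A -> A -> Prop)
  (Htr : forall a b c, le a b -> le b c -> le a c) (u v w : list A) :
  higman le u v -> higman le v w -> higman le u w.
Proof.
  intros [h1 [M1 E1]] [h2 [M2 E2]].
  assert (Hlen : forall i, i < length u -> h1 i < length v).
  { intros i Hi. destruct (E1 i Hi) as [a [b [_ [Hb _]]]].
    apply nth_error_Some. rewrite Hb. discriminate. }
  exists (fun i => h2 (h1 i)). split.
  - intros i j Hij Hj. apply M2; [apply M1 | apply Hlen]; assumption.
  - intros i Hi. destruct (E1 i Hi) as [a [b [Ha [Hb Hab]]]].
    destruct (E2 (h1 i) (Hlen i Hi)) as [b' [c [Hb' [Hc Hbc]]]].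
    rewrite Hb in Hb'. injection Hb' as <-. exists a, c. eauto.
Qed.

Lemma higman_app_l {A : Type} (le : A -> A -> Prop) (Hrefl : forall a, le a a)
  (u v : list A) : higman le u (u ++ v).
Proof.
  exists (fun i => i). split; [tauto|].
  intros i Hi. destruct (nth_error u i) as [a|] eqn:E.
  - exists a, a. rewrite nth_error_app1 by exact Hi. auto.
  - apply nth_error_None in E. lia.
Qed.

Lemma higman_app_r {A : Type} (le : A -> A -> Prop) (Hrefl : forall a, le a a)
  (u v : list A) : higman le v (u ++ v).
Proof.
  exists (fun i => length u + i). split; [intros; lia|].
  intros i Hi. destruct (nth_error v i) as [a|] eqn:E.
  - exists a, a. rewrite nth_error_app2 by lia.
    replace (length u + i - length u) with i by lia. auto.
  - apply nth_error_None in E. lia.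
Qed.

Definition up_closed {X : Type} (r : X -> X -> Prop) (U : X -> Prop) : Prop :=
  forall x y, U x -> r x y -> U y.

Lemma generated_up_closed {X : Type} (r : X -> X -> Prop) (G : (X -> Prop) -> Prop) :
  (forall A, G A -> up_closed r A) -> forall O, generated G O -> up_closed r O.
Proof.
  intros HG. apply generated_min; [split; [|split] | exact HG].
  - intros x y _ _. exact I.
  - intros U V HU HV x y [Ux Vx] Hxy. split; [apply (HU x) | apply (HV x)]; assumption.
  - intros F HF x y [U [FU Ux]] Hxy. exists U. split; [|apply (HF U FU x)]; assumption.
Qed.

Definition agree {X : Type} (H U V : X -> Prop) : Prop :=
  forall x, H x -> (U x <-> V x).

Definition traces_in {X : Type} (H : X -> Prop) (T1 T2 : (X -> Prop) -> Prop) : Prop :=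
  forall O, T1 O -> exists O', T2 O' /\ agree H O O'.

Lemma traces_in_generated {X : Type} (H : X -> Prop) (G T : (X -> Prop) -> Prop) :
  is_topology T -> (forall A, G A -> exists O', T O' /\ agree H A O') ->
  traces_in H (generated G) T.
Proof.
  intros [Htop [Hinter Hunion]] HG. apply generated_min; [split; [|split] | exact HG].
  - exists (fun _ => True). split; [exact Htop | intros x _; tauto].
  - intros U V [U' [HU' AU]] [V' [HV' AV]].
    exists (fun x => U' x /\ V' x). split; [apply Hinter; assumption|].
    intros x Hx. rewrite (AU x Hx), (AV x Hx). tauto.
  - intros F HF. exists (union_of (fun U' => T U' /\ exists U, F U /\ agree H U U')).
    split; [apply Hunion; intros U' [HU' _]; exact HU'|].
    intros x Hx. split.
    + intros [U [FU Ux]]. destruct (HF U FU) as [U' [HU' AU]].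
      exists U'. split; [split; eauto | apply AU; assumption].
    + intros [U' [[_ [U [FU AU]]] U'x]]. exists U. split; [|apply AU]; assumption.
Qed.

Lemma traces_in_restrict {X : Type} (H : X -> Prop) (T : (X -> Prop) -> Prop) :
  is_topology T -> traces_in H (restrict T H) T.
Proof.
  intros HT. apply traces_in_generated; [exact HT|].
  intros A [U [HU ->]]. exists U. split; [exact HU | intros x Hx; tauto].
Qed.

Lemma restrict_sub {X : Type} (H : X -> Prop) (T1 T2 : (X -> Prop) -> Prop) :
  traces_in H T1 T2 -> fsubset (restrict T1 H) (restrict T2 H).
Proof.
  intros Htr. apply generated_sub. intros A [U [HU ->]].
  destruct (Htr U HU) as [U' [HU' AU]].
  apply open_ext with (fun x => U' x /\ H x).
  - apply generated_incl. exists U'. auto.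
  - intros x. split; intros [Ux Hx]; split; try apply (AU x Hx); assumption.
Qed.

Section SMap.
Context {Sigma : Type} (theta : (Sigma -> Prop) -> Prop).

Local Notation le := (spec_le theta).

Lemma spec_le_refl (a : Sigma) : le a a.
Proof. intros U _ Ua. exact Ua. Qed.

Lemma spec_le_trans (a b c : Sigma) : le a b -> le b c -> le a c.
Proof. intros Hab Hbc U HU Ua. apply (Hbc U HU), (Hab U HU), Ua. Qed.

Definition concat_up (R : list Sigma * list Sigma -> Prop) : list Sigma -> Prop :=
  upclose le (fun w => exists u v, R (u, v) /\ w = u ++ v).

Definition letters_up (W : Sigma -> Prop) : list Sigma -> Prop :=
  upclose le (letters W).

Lemma upclose_concat_set (U V : list Sigma -> Prop) :
  upclose le (concat_set U V) = concat_up (fun p => U (fst p) /\ V (snd p)).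
Proof.
  apply set_ext. intros w. split.
  - intros [w0 [[u [v [Uu [Vv ->]]]] Hw]]. exists (u ++ v). split; [exists u, v|]; auto.
  - intros [w0 [[u [v [[Uu Vv] ->]]] Hw]]. exists (u ++ v). split; [exists u, v|]; auto.
Qed.

Lemma noetherian_S_map (t : (list Sigma -> Prop) -> Prop) :
  noetherian t -> noetherian theta -> noetherian (S_map theta t).
Proof.
  intros Hn Hth. apply noetherian_generated.
  apply (noetherian_family_sub (fun A => image_family concat_up (prod_topology t) A \/
                                         image_family letters_up theta A)).
  - intros A [[U [V [HU [HV ->]]]] | [W [HW ->]]].
    + left. rewrite upclose_concat_set. exists (fun p => U (fst p) /\ V (snd p)).
      split; [apply prod_topology_rect; assumption | reflexivity].
    + right. exists W. auto.
  - apply noetherian_family_union; apply noetherian_family_image.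
    + intros R R' HR w [w0 [[u [v [Ruv ->]]] Hw]].
      exists (u ++ v). split; [exists u, v; split; [apply HR|]|]; auto.
    + intros l w [w0 [[u [v [[R [HR Ruv]] ->]]] Hw]]. exists (concat_up R).
      split; [apply in_map, HR | exists (u ++ v); split; [exists u, v|]; auto].
    + apply noetherian_family_of_noetherian, noetherian_prod_topology, Hn.
    + intros W W' HW w [w0 [[a [Wa ->]] Hw]]. exists [a]. split; [exists a|]; auto.
    + intros l w [w0 [[a [[W [HW Wa]] ->]] Hw]]. exists (letters_up W).
      split; [apply in_map, HW | exists [a]; split; [exists a|]; auto].
    + apply noetherian_family_of_noetherian, Hth.
Qed.

Lemma S_map_mono (t1 t2 : (list Sigma -> Prop) -> Prop) :
  fsubset t1 t2 -> fsubset (S_map theta t1) (S_map theta t2).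
Proof.
  intros H12. apply generated_sub. intros A HA. apply generated_incl.
  destruct HA as [[U [V [HU [HV ->]]]] | HA].
  - left. exists U, V. auto.
  - right. exact HA.
Qed.

Lemma S_map_up_closed (t : (list Sigma -> Prop) -> Prop) (O : list Sigma -> Prop) :
  S_map theta t O -> up_closed (higman le) O.
Proof.
  apply generated_up_closed.
  intros A [[U [V [_ [_ ->]]]] | [W [_ ->]]] x y [w [Hw Hwx]] Hxy;
    exists w; split; [exact Hw | | exact Hw |];
    apply (higman_trans le spec_le_trans _ x); assumption.
Qed.

Section Restriction.
Variable H : list Sigma -> Prop.
Hypothesis H_down : up_closed (higman le) (fun w => ~ H w).

Lemma down_closed_app (u v : list Sigma) : H (u ++ v) -> H u /\ H v.
Proof.
  intros Huv. split; apply NNPP; intros Hn.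
  - exact (H_down _ _ Hn (higman_app_l le spec_le_refl u v) Huv).
  - exact (H_down _ _ Hn (higman_app_r le spec_le_refl u v) Huv).
Qed.

Lemma agree_upclose_concat (U U' V V' : list Sigma -> Prop) :
  agree H U U' -> agree H V V' ->
  agree H (upclose le (concat_set U V)) (upclose le (concat_set U' V')).
Proof.
  assert (Hdir : forall U U' V V', agree H U U' -> agree H V V' ->
            forall w, H w -> upclose le (concat_set U V) w -> upclose le (concat_set U' V') w).
  { intros U1 U1' V1 V1' AU AV w Hw [w0 [[u [v [Uu [Vv ->]]]] Hw0]].
    assert (Huv : H (u ++ v)) by (apply NNPP; intros Hn; exact (H_down _ _ Hn Hw0 Hw)).
    destruct (down_closed_app u v Huv) as [Hu Hv].
    exists (u ++ v). split; [exists u, v; split; [apply AU | split; [apply AV|]]|]; auto. }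
  intros AU AV w Hw. split; apply Hdir; auto; intros x Hx; symmetry; auto.
Qed.

Lemma S_map_traces_in_restrict (t : (list Sigma -> Prop) -> Prop) :
  traces_in H (S_map theta t) (S_map theta (restrict t H)).
Proof.
  apply traces_in_generated; [apply generated_is_topology|].
  intros A [[U [V [HU [HV ->]]]] | [W [HW ->]]].
  - exists (upclose le (concat_set (fun x => U x /\ H x) (fun x => V x /\ H x))). split.
    + apply generated_incl. left. eexists _, _.
      split; [|split; [|reflexivity]]; apply generated_incl; eexists; eauto.
    + apply agree_upclose_concat; intros x Hx; tauto.
  - exists (letters_up W). split.
    + apply generated_incl. right. exists W. auto.
    + intros x _. reflexivity.
Qed.

Lemma S_map_restrict_traces_in (t : (list Sigma -> Prop) -> Prop) :
  is_topology t -> traces_in H (S_map theta (restrict t H)) (S_map theta t).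
Proof.
  intros Ht. apply traces_in_generated; [apply generated_is_topology|].
  intros A [[U' [V' [HU' [HV' ->]]]] | [W [HW ->]]].
  - destruct (traces_in_restrict H t Ht U' HU') as [U [HU AU]].
    destruct (traces_in_restrict H t Ht V' HV') as [V [HV AV]].
    exists (upclose le (concat_set U V)). split.
    + apply generated_incl. left. exists U, V. auto.
    + apply agree_upclose_concat; assumption.
  - exists (letters_up W). split.
    + apply generated_incl. right. exists W. auto.
    + intros x _. reflexivity.
Qed.

End Restriction.
End SMap.

Theorem mainTheorem12 (Sigma : Type) (theta : (Sigma -> Prop) -> Prop)
  (Htop : is_topology theta) (Hnoeth : noetherian theta) :
  topology_expander (S_map theta).
Proof.
  split; [split; [|split] |].
  - intros t _. apply generated_is_topology.
  - intros t1 t2 _ _. apply S_map_mono.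
  - intros t _ Hn. apply noetherian_S_map; assumption.
  - intros t Ht _ Hsub H HH.
    assert (H_down : up_closed (higman (spec_le theta)) (fun w => ~ H w))
      by exact (S_map_up_closed theta t _ (Hsub _ HH)).
    split; apply restrict_sub;
      [apply S_map_traces_in_restrict | apply S_map_restrict_traces_in]; assumption.
Qed.
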